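(* Let $C=(C_1,\dots,C_n)\in\mathbb{F}_p^n$ and $(d_1,\dots,d_n)\in\mathbb{F}_p^n$ be a solution of the system $$\sum_{j=1}^n M_jC_j=0,\qquad \Omega^M_j C=d_j C\ \ (j=1,\dots,n-1),\qquad d_n=0.$$ Let the index $i$ be such that $C_i\neq 0$ and $C_j=0$ for $j=1,\dots,i-1$. Then $$d_j=M_j\ (j=1,\dots,i-1),\qquad d_i=\sum_{j=i}^n M_j,\quad d_i\neq M_i,\qquad d_j=0\ (j=i+1,\dots,n),$$ $$\sum_{l=i+1}^n M_l\neq 0,\qquad C_j=-\frac{M_i}{\sum_{l=i+1}^n M_l}\,C_i\quad (j=i+1,\dots,n).$$ Conversely, if a pair $C=(C_1,\dots,C_n)$, $(d_1,\dots,d_n)\in\mathbb{F}_p^n$ satisfies, for some index $i$, the conditions $C_i\neq0$, $C_j=0$ for $j<i$, together with $d_j=M_j$ for $j<i$, $d_i=\sum_{j=i}^nM_j$, $d_i\neq M_i$, $d_j=0$ for $j>i$, $\sum_{l=i+1}^nM_l\neq0$, and $C_j=-\frac{M_i}{\sum_{l=i+1}^nM_l}C_i$ for $j>i$, then it is a solution of the system above.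
   Context: $p$ and $q$ are primes, $n$ is a positive integer with $p>n\geq 2$ and $p>q$; $(m_1,\dots,m_n)\in\mathbb{Z}_{>0}^n$ with $m_i<q$. For $i=1,\dots,n$, $M_i$ is the least positive integer with $M_i\equiv -m_i/q \pmod p$. For $j\neq l$, $\Omega^M_{jl}$ is the $n\times n$ matrix over $\mathbb{F}_p$ whose only nonzero entries are: $(j,j)$-entry $M_l$, $(j,l)$-entry $-M_l$, $(l,j)$-entry $-M_j$, $(l,l)$-entry $M_j$. For $j=1,\dots,n-1$, $\Omega^M_j=\sum_{l=j+1}^n\Omega^M_{jl}$, acting on column vectors $C\in\mathbb{F}_p^n$. (This system describes the possible leading coefficient $C$ and exponents $(d_1,\dots,d_n)$ mod $p$ of the leading term, in lexicographic order $z_1>z_2>\dots>z_n$, of a polynomial solution over $\mathbb{F}_p$ of the KZ system $\partial I/\partial z_i=\frac1q\sum_{j\ne i}\frac{\Omega_{ij}}{z_i-z_j}I$, $\sum m_iI_i=0$.) *)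

From mathcomp Require Import all_boot all_order all_algebra.
Set Implicit Arguments. Unset Strict Implicit. Unset Printing Implicit Defensive.
Import GRing.Theory.
Local Open Scope ring_scope.

Definition OmegaM_jl (F : ringType) (n : nat) (M : 'I_n -> F) (j l : 'I_n)
  : 'M[F]_n :=
  \matrix_(a, b)
    if (a == j) && (b == j) then M l
    else if (a == j) && (b == l) then - M l
    else if (a == l) && (b == j) then - M j
    else if (a == l) && (b == l) then M j
    else 0.

Definition OmegaM_j (F : ringType) (n : nat) (M : 'I_n -> F) (j : 'I_n)
  : 'M[F]_n :=
  \sum_(l : 'I_n | (j < l)%N) OmegaM_jl M j l.

(* M_i is the least positive integer with M_i = -m_i/q (mod p),
   i.e. M_i * q + m_i = 0 (mod p) (q is invertible mod p since 1 < q < p prime). *)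
Definition is_least_M (p q mi Mi : nat) : Prop :=
  [/\ (0 < Mi)%N, (Mi * q + mi == 0 %[mod p])%N &
      forall k : nat, (0 < k)%N -> (k * q + mi == 0 %[mod p])%N -> (Mi <= k)%N].

From mathcomp Require Import all_boot all_order all_algebra.
From mathcomp Require Import zify ring.
(* Row a of Omega^M_j C is M_j (C_a - C_j) for a > j, sum_{l>j} M_l (C_j - C_l)
   for a = j, and 0 for a < j.  Reading row i of the eigen-equation for j <> i
   gives d_j = M_j (j < i) and d_j = 0 (j > i).  For j = i, the rows a > i make
   C constant, equal to M_i C_i / (M_i - d_i), after position i (M_i <> 0 in F_p
   because p cannot divide M_i q + m_i with 0 < m_i < q < p); row i then gives
   d_i (d_i - M_i - S) = 0, and sum_j M_j C_j = 0 turns the root d_i = 0 into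
   d_i = M_i + S as well. *)

Set Implicit Arguments. Unset Strict Implicit. Unset Printing Implicit Defensive.
Import GRing.Theory.
Local Open Scope ring_scope.

Lemma ord_ltn_eqF n (j l : 'I_n) : (j < l)%N -> (j == l) = false.
Proof. by move=> lt_jl; rewrite -val_eqE ltn_eqF. Qed.

Lemma ord_gtn_eqF n (j l : 'I_n) : (j < l)%N -> (l == j) = false.
Proof. by move=> lt_jl; rewrite eq_sym ord_ltn_eqF. Qed.

Lemma big_ord_geq (V : nmodType) n (f : 'I_n -> V) (i : 'I_n) :
  \sum_(j : 'I_n | (i <= j)%N) f j = f i + \sum_(j : 'I_n | (i < j)%N) f j.
Proof.
rewrite (bigD1 i) //=; apply: congr1; apply: eq_bigl => j.
by rewrite [(i < j)%N]ltn_neqAle eq_sym val_eqE andbC.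
Qed.

Lemma big_ord_gt_neq0_lt_last (V : nmodType) n (f : 'I_n -> V) (i : 'I_n) :
  \sum_(j : 'I_n | (i < j)%N) f j != 0 -> (i < n.-1)%N.
Proof.
apply: contraR; rewrite -leqNgt => le_last_i.
by rewrite big1 // => j lt_ij; have := ltn_ord j; lia.
Qed.

Lemma col_eq_scaleP (R : pzRingType) n (u v : 'cV[R]_n) (d : R) :
  u = d *: v <-> forall a, u a 0 = d * v a 0.
Proof.
split=> [-> a | eq_uv]; first by rewrite mxE.
by apply/matrixP => a b; rewrite [b]ord1 eq_uv mxE.
Qed.

Lemma OmegaM_jl_mulE (R : ringType) n (M : 'I_n -> R) (j l : 'I_n)
    (C : 'cV[R]_n) (a : 'I_n) :
  j != l ->
  (OmegaM_jl M j l *m C) a 0 =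
    if a == j then M l * (C j 0 - C l 0)
    else if a == l then M j * (C l 0 - C j 0) else 0.
Proof.
move=> neq_jl; rewrite mxE (bigD1 j) //= (bigD1 l) /=; last by rewrite eq_sym neq_jl.
rewrite big1 ?addr0 => [|b /andP[neq_bl neq_bj]]; last first.
  by rewrite mxE (negbTE neq_bl) (negbTE neq_bj) !andbF mul0r.
rewrite !mxE !eqxx (negbTE neq_jl) [l == j]eq_sym (negbTE neq_jl) !andbT !andbF.
case: eqVneq => [_|_] /=; first by rewrite mulrBr mulNr.
case: eqVneq => [_|_] /=; first by rewrite mulrBr mulNr addrC.
by rewrite !mul0r addr0.
Qed.

Lemma OmegaM_j_mulE (R : ringType) n (M : 'I_n -> R) (j : 'I_n)
    (C : 'cV[R]_n) (a : 'I_n) :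
  (OmegaM_j M j *m C) a 0 =
    if a == j then \sum_(l : 'I_n | (j < l)%N) M l * (C j 0 - C l 0)
    else if (j < a)%N then M j * (C a 0 - C j 0) else 0.
Proof.
rewrite /OmegaM_j mulmx_suml summxE.
have OmegaM_jl_gtE (b l : 'I_n) : (j < l)%N -> (OmegaM_jl M j l *m C) b 0 =
    if b == j then M l * (C j 0 - C l 0)
    else if b == l then M j * (C l 0 - C j 0) else 0.
  by move=> lt_jl; rewrite OmegaM_jl_mulE // ord_ltn_eqF.
case: eqVneq => [->|neq_aj].
  by apply: eq_bigr => l /OmegaM_jl_gtE ->; rewrite eqxx.
case: ifP => [lt_ja|not_lt_ja].
  rewrite (bigD1 a) //= OmegaM_jl_gtE // (negbTE neq_aj) eqxx.
  rewrite big1 ?addr0 // => l /andP[lt_jl neq_la].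
  by rewrite OmegaM_jl_gtE // (negbTE neq_aj) eq_sym (negbTE neq_la).
rewrite big1 // => l lt_jl; rewrite OmegaM_jl_gtE // (negbTE neq_aj).
by case: eqVneq => [eq_al|//]; rewrite eq_al lt_jl in not_lt_ja.
Qed.

Lemma least_M_natr_neq0 p q m Mi :
  prime p -> (q < p)%N -> (0 < m)%N -> (m < q)%N -> is_least_M p q m Mi ->
  (Mi%:R : 'F_p) != 0.
Proof.
move=> p_pr lt_qp m_gt0 lt_mq [_ Mq_m _].
rewrite -(dvdn_pcharf (pchar_Fp p_pr)); apply/negP => dvd_p_Mi.
have : (p %| Mi * q + m)%N by rewrite /dvdn -(mod0n p).
rewrite dvdn_addr ?dvdn_mulr // => /(dvdn_leq m_gt0); lia.
Qed.

Section LeadingCoefficient.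

Context {F : fieldType} {n : nat} {M : 'I_n -> F} {C : 'cV[F]_n} {i : 'I_n}.
Hypothesis Ci_neq0 : C i 0 != 0.
Hypothesis C_lt0 : forall j : 'I_n, (j < i)%N -> C j 0 = 0.

Let S := \sum_(l : 'I_n | (i < l)%N) M l.

Lemma weighted_sum_leading :
  \sum_l M l * C l 0 = M i * C i 0 + \sum_(l : 'I_n | (i < l)%N) M l * C l 0.
Proof.
rewrite -big_ord_geq [RHS]big_rmcond // => j; rewrite -ltnNge => /C_lt0 ->.
by rewrite mulr0.
Qed.

Lemma eigen_OmegaM_lt {j : 'I_n} {d : F} : (j < i)%N ->
  OmegaM_j M j *m C = d *: C <-> d = M j /\ \sum_l M l * C l 0 = 0.
Proof.
move=> lt_ji; have Cj0 := C_lt0 lt_ji.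
have row_j : \sum_(l : 'I_n | (j < l)%N) M l * (C j 0 - C l 0)
             = - \sum_l M l * C l 0.
  rewrite big_rmcond => [|l].
    by rewrite -sumrN; apply: eq_bigr => l _; rewrite Cj0 sub0r mulrN.
  rewrite -leqNgt => le_lj.
  by rewrite Cj0 C_lt0 ?subrr ?mulr0 // (leq_ltn_trans le_lj).
split=> [/col_eq_scaleP eig | [-> sum0]].
  have := eig j; rewrite OmegaM_j_mulE eqxx row_j Cj0 mulr0 => /eqP.
  rewrite oppr_eq0 => /eqP sum0; split => //.
  have := eig i; rewrite OmegaM_j_mulE ord_gtn_eqF // lt_ji Cj0 subr0.
  by move/(mulIf Ci_neq0).
apply/col_eq_scaleP => a; rewrite OmegaM_j_mulE.
case: eqVneq => [->|_]; first by rewrite row_j sum0 oppr0 Cj0 mulr0.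
case: ifP => [_|/negbT]; first by rewrite Cj0 subr0.
by rewrite -leqNgt => le_aj; rewrite C_lt0 ?mulr0 // (leq_ltn_trans le_aj).
Qed.

Lemma eigen_OmegaM_gt {j : 'I_n} {d c : F} :
  (forall l : 'I_n, (i < l)%N -> C l 0 = c) -> (i < j)%N ->
  OmegaM_j M j *m C = d *: C <-> d = 0.
Proof.
move=> C_tail lt_ij; split=> [/col_eq_scaleP eig | ->].
  have := eig i; rewrite OmegaM_j_mulE ord_ltn_eqF // ltnNge (ltnW lt_ij) /=.
  by move/esym/eqP; rewrite mulf_eq0 (negbTE Ci_neq0) orbF => /eqP.
have C_tail_j (l : 'I_n) : (j < l)%N -> C l 0 = C j 0.
  by move=> lt_jl; rewrite !C_tail // (ltn_trans lt_ij).
apply/col_eq_scaleP => a; rewrite OmegaM_j_mulE mul0r.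
case: eqVneq => [_|_]; first by rewrite big1 // => l /C_tail_j ->; rewrite subrr mulr0.
by case: ifP => // /C_tail_j ->; rewrite subrr mulr0.
Qed.

Hypothesis M_neq0 : forall j, M j != 0.

Lemma leading_lt_last : \sum_l M l * C l 0 = 0 -> (i < n.-1)%N.
Proof.
rewrite weighted_sum_leading => /eqP; rewrite addr_eq0 => /eqP tail_sum.
apply: (@big_ord_gt_neq0_lt_last F n (fun l => M l * C l 0) i).
by rewrite -oppr_eq0 -tail_sum mulf_neq0.
Qed.

Lemma eigen_OmegaM_leading_tail {d : F} : (i < n.-1)%N ->
  OmegaM_j M i *m C = d *: C ->
  d != M i /\ forall l : 'I_n, (i < l)%N -> C l 0 = M i * C i 0 / (M i - d).
Proof.
move=> lt_i_last /col_eq_scaleP eig.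
have row_tail (l : 'I_n) : (i < l)%N -> (M i - d) * C l 0 = M i * C i 0.
  move=> lt_il; have := eig l; rewrite OmegaM_j_mulE ord_gtn_eqF // lt_il.
  by rewrite mulrBl => <-; ring.
have lt_i1 : (i.+1 < n)%N by lia.
have neq_d : d != M i.
  apply: contra_neq (mulf_neq0 (M_neq0 i) Ci_neq0) => eq_d.
  by rewrite -(row_tail (Ordinal lt_i1)) // eq_d subrr mul0r.
split=> // l lt_il.
by rewrite -(row_tail l lt_il) [RHS]mulrC mulKf // subr_eq0 eq_sym.
Qed.

Lemma eigen_OmegaM_leading {d : F} : \sum_l M l * C l 0 = 0 ->
  OmegaM_j M i *m C = d *: C <->
  [/\ d = M i + S, S != 0 & forall l : 'I_n, (i < l)%N -> C l 0 = - (M i / S) * C i 0].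
Proof.
move=> sum0; split=> [eig | [-> S_neq0 C_tail]].
  have [neq_d C_tail] := eigen_OmegaM_leading_tail (leading_lt_last sum0) eig.
  have neq_den : M i - d != 0 by rewrite subr_eq0 eq_sym.
  set k := M i * C i 0 / (M i - d) in C_tail.
  have row_i : S * (C i 0 - k) = d * C i 0.
    move/col_eq_scaleP: eig => /(_ i); rewrite OmegaM_j_mulE eqxx => <-.
    by rewrite mulr_suml; apply: eq_bigr => l /C_tail ->.
  have dE : d = M i + S.
    have : d * (d - M i - S) * C i 0 = (M i - d) * (S * (C i 0 - k) - d * C i 0).
      by rewrite /k; field.
    rewrite row_i subrr mulr0 => /eqP; rewrite !mulf_eq0 (negbTE Ci_neq0) orbF.
    case/orP => [/eqP d0 | ]; last by rewrite subr_eq0 subr_eq addrC => /eqP.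
    move: sum0; rewrite weighted_sum_leading (eq_bigr (fun l => M l * C i 0)).
      rewrite -mulr_suml -mulrDl => /eqP.
      by rewrite mulf_eq0 (negbTE Ci_neq0) orbF d0 => /eqP.
    by move=> l /C_tail ->; rewrite /k d0 subr0 mulrAC divff ?mul1r.
  have S_neq0 : S != 0 by apply: contra_neq neq_d; rewrite dE => ->; rewrite addr0.
  split=> // l /C_tail ->; rewrite /k dE.
  have -> : M i - (M i + S) = - S by ring.
  by field; rewrite oppr_eq0 andbb.
apply/col_eq_scaleP => a; rewrite OmegaM_j_mulE.
case: eqVneq => [->|neq_ai].
  rewrite (eq_bigr (fun l => M l * ((1 + M i / S) * C i 0))) => [|l /C_tail ->].
    by rewrite -mulr_suml -/S; field.
  by ring.
case: ifP => [/C_tail ->|/negbT]; first by field.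
rewrite -leqNgt => le_ai; rewrite C_lt0 ?mulr0 //.
by rewrite ltn_neqAle le_ai andbT.
Qed.

Lemma weighted_sum_eq0 :
  S != 0 -> (forall l : 'I_n, (i < l)%N -> C l 0 = - (M i / S) * C i 0) ->
  \sum_l M l * C l 0 = 0.
Proof.
move=> S_neq0 C_tail; rewrite weighted_sum_leading.
rewrite (eq_bigr (fun l => M l * (- (M i / S) * C i 0))) => [|l /C_tail -> //].
by rewrite -mulr_suml -/S; field.
Qed.

End LeadingCoefficient.

Theorem theorem5p3 (p q n : nat) (m M : 'I_n -> nat)
  (hp : prime p) (hq : prime q) (hn : (2 <= n)%N) (hpn : (n < p)%N)
  (hpq : (q < p)%N)
  (hm : forall i, (0 < m i)%N /\ (m i < q)%N)
  (hM : forall i, is_least_M p q (m i) (M i))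
  (C : 'cV['F_p]_n) (d : 'I_n -> 'F_p) (i : 'I_n)
  (hCi : C i 0 != 0) (hCj : forall j : 'I_n, (j < i)%N -> C j 0 = 0) :
  let MF := fun j : 'I_n => ((M j)%:R : 'F_p) in
  let S := \sum_(l : 'I_n | (i < l)%N) MF l in
  ( \sum_(j : 'I_n) MF j * C j 0 = 0
    /\ (forall j : 'I_n, (j < n.-1)%N -> OmegaM_j MF j *m C = d j *: C)
    /\ (forall j : 'I_n, nat_of_ord j = n.-1 -> d j = 0) )
  <->
  ( (forall j : 'I_n, (j < i)%N -> d j = MF j)
    /\ d i = \sum_(j : 'I_n | (i <= j)%N) MF j
    /\ d i != MF i
    /\ (forall j : 'I_n, (i < j)%N -> d j = 0)
    /\ S != 0
    /\ (forall j : 'I_n, (i < j)%N -> C j 0 = - (MF i / S) * C i 0) ).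
Proof.
move=> MF S.
have MF_neq0 j : MF j != 0.
  by have [m_gt0 lt_mq] := hm j; apply: least_M_natr_neq0 lt_mq (hM j).
have lt_last_S : S != 0 -> (i < n.-1)%N := @big_ord_gt_neq0_lt_last _ _ MF i.
split=> [[sum0 [eig eig_last]] | [d_lt [d_i [_ [d_gt [S_neq0 C_tail]]]]]].
  have lt_i_last := leading_lt_last hCi hCj MF_neq0 sum0.
  have [d_iE S_neq0 C_tail] :=
    (eigen_OmegaM_leading hCi hCj MF_neq0 sum0).1 (eig i lt_i_last).
  split=> [j lt_ji|].
    exact: ((eigen_OmegaM_lt hCi hCj lt_ji).1 (eig j (ltn_trans lt_ji lt_i_last))).1.
  split; first by rewrite big_ord_geq.
  split; first by rewrite d_iE -subr_eq0 addrC addKr.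
  split=> [j lt_ij|]; last by [].
  have [lt_j_last|le_last_j] := ltnP j n.-1.
    exact: (eigen_OmegaM_gt hCi C_tail lt_ij).1 (eig j lt_j_last).
  by apply: eig_last; have := ltn_ord j; lia.
have sum0 := weighted_sum_eq0 hCj S_neq0 C_tail.
split=> //; split=> [j _ | j j_last].
  case: (ltngtP j i) => [lt_ji | lt_ij | /ord_inj ->].
  - by apply/(eigen_OmegaM_lt hCi hCj lt_ji); split; [apply: d_lt |].
  - exact/(eigen_OmegaM_gt hCi C_tail lt_ij)/d_gt.
  - apply/(eigen_OmegaM_leading hCi hCj MF_neq0 sum0).
    by rewrite d_i big_ord_geq.
by apply: d_gt; rewrite j_last; exact: lt_last_S.
Qed.
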